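(* Let $n\ge 1$, let $K:(0,\infty)\to(0,\infty)$ be a smooth function, and let $\Phi$ be an antiderivative of $\sqrt{K}$ on $(0,\infty)$ (for instance $\Phi(\varrho)=\int_0^\varrho\sqrt{K(s)}\,ds$ when this integral converges). Let $\varphi:(0,\infty)\to\mathbb{R}$ and $F:(0,\infty)\to\mathbb{R}$ be smooth functions satisfying $$\sqrt{\varrho}\,\varphi'(\varrho)=\sqrt{K(\varrho)},\qquad F'(\varrho)=\sqrt{K(\varrho)\,\varrho}\qquad(\varrho>0).$$ Then for every smooth positive function $\varrho:\Omega\to(0,\infty)$ on an open set $\Omega\subset\mathbb{R}^n$, $$\varrho\,\nabla\Bigl(\sqrt{K(\varrho)}\,\Delta\bigl(\Phi(\varrho)\bigr)\Bigr)={\rm div}\Bigl(F(\varrho)\,\nabla\nabla\varphi(\varrho)\Bigr)-\nabla\Bigl(\bigl(F(\varrho)-\varrho F'(\varrho)\bigr)\,\Delta\varphi(\varrho)\Bigr)$$ holds on $\Omega$.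
   Context: $\nabla\nabla\varphi(\varrho)$ denotes the Hessian matrix of the function $x\mapsto\varphi(\varrho(x))$, and ${\rm div}$ of a matrix field $M$ is the vector field with components $({\rm div} M)_i=\sum_j\partial_j M_{ij}$. $\Delta$ is the Laplacian. In the special case $K(\varrho)=c/\varrho$ this identity reduces to the quantum Bohm identity $2\varrho\,{\rm div}(\Delta\sqrt{\varrho}/\sqrt{\varrho})={\rm div}(\varrho\nabla\nabla\log\varrho)$ (up to the constant $c$). *)

From HB Require Import structures.
From mathcomp Require Import all_boot all_order all_algebra.
From mathcomp Require Import all_classical all_reals all_analysis.
Set Implicit Arguments. Unset Strict Implicit. Unset Printing Implicit Defensive.
Import Order.TTheory GRing.Theory Num.Theory.
Import numFieldNormedType.Exports.
Local Open Scope ring_scope.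

Definition ebasis (R : realType) (n : nat) (i : 'I_n) : 'rV[R]_n :=
  delta_mx 0 i.

Definition partial (R : realType) (n : nat) (i : 'I_n) (f : 'rV[R]_n -> R)
  : 'rV[R]_n -> R :=
  fun x => derive f x (ebasis R i).

Fixpoint iter_partial (R : realType) (n : nat) (s : seq 'I_n)
  (f : 'rV[R]_n -> R) : 'rV[R]_n -> R :=
  match s with
  | [::] => f
  | i :: s' => partial i (iter_partial s' f)
  end.

Definition smooth_on (R : realType) (n : nat) (Omega : set 'rV[R]_n)
  (f : 'rV[R]_n -> R) : Prop :=
  forall (s : seq 'I_n) (x : 'rV[R]_n), Omega x ->
    {for x, continuous (iter_partial s f)} /\
    (forall i : 'I_n, derivable (iter_partial s f) x (ebasis R i)).

Definition smooth_pos (R : realType) (g : R -> R) : Prop :=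
  forall (k : nat) (r : R), 0 < r -> derivable (derive1n k g) r 1.

Definition laplacian (R : realType) (n : nat) (f : 'rV[R]_n -> R)
  : 'rV[R]_n -> R :=
  fun x => \sum_(i < n) partial i (partial i f) x.

From HB Require Import structures.
From mathcomp Require Import all_boot all_order all_algebra.
From mathcomp Require Import all_classical all_reals all_analysis.
From mathcomp Require Import ring lra.
Import Order.TTheory GRing.Theory Num.Theory.
Import numFieldNormedType.Exports.
Local Open Scope ring_scope.

(* Expanding every term by the chain and product rules turns both sides into
   polynomials in the partial derivatives of rho up to order three, with
   coefficients the derivatives of K, Phi, phi and F at rho.  With p = phi' the
   hypotheses read K = r p^2 and F' = r p, so K', K'' and F'' are polynomials in
   p, p', p''; and Phi' = sqrt K gives
   sqrt K(rho) * Delta Phi(rho) = sum_j (K'(rho)/2 rho_j^2 + K(rho) rho_jj),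
   which avoids differentiating sqrt K twice.  The terms containing F itself
   cancel once d_j d_i d_j phi(rho) is identified with d_i d_j d_j phi(rho) by the
   symmetry of the second derivatives of rho (Schwarz's theorem, obtained by
   applying the mean value theorem twice to a mixed second difference); what
   remains is a polynomial identity. *)

Section DirectionalDerivative.
Context {R : realType} {V : normedModType R}.
Implicit Types (f u : V -> R) (x v y : V).

Let difference_quotient_line f v y s :
  (fun h : R => h^-1 *: ((f \o shift (s *: v + y)) (h *: v) - f (s *: v + y))) =
  (fun h : R => h^-1 *: (((fun t => f (t *: v + y)) \o shift s) (h *: 1)
      - f (s *: v + y))).
Proof. by apply/funext => h /=; rewrite scalerDl addrA [_%:A]mulr1. Qed.

Lemma is_derive_lineP f v y s df :
  is_derive (s *: v + y) v f df <-> is_derive s 1 (fun t => f (t *: v + y)) df.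
Proof.
split=> -[d <-]; split;
  by move: d; rewrite /derivable /derive difference_quotient_line.
Qed.

Lemma is_derive_line f v y s : derivable f (s *: v + y) v ->
  is_derive s 1 (fun t => f (t *: v + y)) ('D_v f (s *: v + y)).
Proof. by move/derivableP/is_derive_lineP. Qed.

Lemma is_derive_scalar_comp (g : R -> R) u x v du dg :
  is_derive x v u du -> is_derive (u x) 1 g dg ->
  is_derive x v (fun z => g (u z)) (dg * du).
Proof.
rewrite -[x]add0r -(scale0r v) !is_derive_lineP => du' dg'.
exact: is_derive1_comp.
Qed.

(* Pointwise forms of the library rules (stated for [f * u], [f + u], ...), so
   that [apply:] matches goals written as [fun z => ...]. *)
Lemma is_derive_mul_fun f u x v df du : is_derive x v f df -> is_derive x v u du ->
  is_derive x v (fun z => f z * u z) (f x * du + u x * df).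
Proof. exact: is_deriveM. Qed.

Lemma is_derive_add_fun f u x v df du : is_derive x v f df -> is_derive x v u du ->
  is_derive x v (fun z => f z + u z) (df + du).
Proof. exact: is_deriveD. Qed.

Lemma is_derive_sub_fun f u x v df du : is_derive x v f df -> is_derive x v u du ->
  is_derive x v (fun z => f z - u z) (df - du).
Proof. exact: is_deriveB. Qed.

Lemma is_derive_sum_fun m (h : 'I_m -> V -> R) x v (dh : 'I_m -> R) :
  (forall j, is_derive x v (h j) (dh j)) ->
  is_derive x v (fun z => \sum_(j < m) h j z) (\sum_(j < m) dh j).
Proof. by move/is_derive_sum; rewrite fct_sumE. Qed.

End DirectionalDerivative.

Lemma MVT_from0 {R : realType} (h dh : R -> R) (t : R) : 0 < t ->
  (forall s : R, 0 <= s <= t -> is_derive s 1 h (dh s)) ->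
  exists2 c, 0 < c < t & h t - h 0 = dh c * t.
Proof.
move=> t0 dh_h.
have dh_open s : s \in `]0, t[ -> is_derive s 1 h (dh s).
  by rewrite in_itv => /andP[s0 st]; apply: dh_h; rewrite !ltW.
have [|c] := MVT t0 dh_open.
  by apply: derivable_within_continuous => s /[!in_itv] /dh_h[].
by rewrite in_itv /= subr0; exists c.
Qed.

Section Schwarz.
Context {R : realType} {V : normedModType R}.
Implicit Types (f : V -> R) (x : V).

Lemma mixed_difference_MVT {f a b x t} {U : set V} : 0 < t ->
  (forall s w, 0 <= s <= t -> 0 <= w <= t -> U (s *: a + (w *: b + x))) ->
  (forall y, U y -> derivable f y a) ->
  (forall y, U y -> derivable ('D_a f) y b) ->
  exists c d, [/\ 0 < c < t, 0 < d < t &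
   f (t *: a + (t *: b + x)) - f (t *: a + x) - f (t *: b + x) + f x
   = 'D_b ('D_a f) (d *: b + (c *: a + x)) * t * t].
Proof.
move=> t0 sqU dfa dfab.
pose h s := f (s *: a + (t *: b + x)) - f (s *: a + x).
have [c /andP[c0 ct] Ec] : exists2 c, 0 < c < t &
    h t - h 0 = ('D_a f (c *: a + (t *: b + x)) - 'D_a f (c *: a + x)) * t.
  apply: MVT_from0 => // s st.
  have Ut : U (s *: a + (t *: b + x)) by apply: sqU; rewrite // lexx ltW.
  have U0 : U (s *: a + x).
    by have := sqU s 0 st; rewrite lexx ltW // scale0r add0r; apply.
  by apply: is_derive_sub_fun; apply/is_derive_line/dfa.
pose k w := 'D_a f (w *: b + (c *: a + x)).
have [d /andP[d0 dt] Ed] : exists2 d, 0 < d < t &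
    k t - k 0 = 'D_b ('D_a f) (d *: b + (c *: a + x)) * t.
  apply: MVT_from0 => // w wt; apply: is_derive_line; apply: dfab.
  by rewrite addrCA; apply: sqU; rewrite // !ltW.
exists c, d; split; rewrite ?c0 ?d0 //.
move: Ec Ed; rewrite /h /k !scale0r !add0r [c *: a + (t *: b + x)]addrCA => Ec Ed.
by rewrite -Ed -Ec; ring.
Qed.

Lemma nbhs_square x a b {U : set V} : nbhs x U ->
  exists2 t, 0 < t &
    forall s w, 0 <= s <= t -> 0 <= w <= t -> U (s *: a + (w *: b + x)).
Proof.
case/nbhs_ballP => r r0 rU.
have [t t0 rE] : exists2 t, 0 < t & r = t * (`|a| + `|b| + 1).
  have ab0 : 0 < `|a| + `|b| + 1 by rewrite ltr_wpDl // addr_ge0.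
  by exists (r / (`|a| + `|b| + 1)); rewrite ?divr_gt0 ?divfK ?lt0r_neq0.
exists t => // s w /andP[s0 st] /andP[w0 wt]; apply: rU.
rewrite -ball_normE /ball_ /= addrA (addrC _ x) opprD addrA subrr add0r normrN.
rewrite (le_lt_trans (ler_normD _ _)) // !normrZ (ger0_norm s0) (ger0_norm w0).
have := ler_wpM2r (normr_ge0 a) st; have := ler_wpM2r (normr_ge0 b) wt.
rewrite rE !mulrDr mulr1; lra.
Qed.

Lemma derive_comm f a b x (U : set V) : nbhs x U ->
  (forall y, U y -> derivable f y a) ->
  (forall y, U y -> derivable f y b) ->
  (forall y, U y -> derivable ('D_a f) y b) ->
  (forall y, U y -> derivable ('D_b f) y a) ->
  {for x, continuous ('D_b ('D_a f))} ->
  {for x, continuous ('D_a ('D_b f))} ->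
  'D_b ('D_a f) x = 'D_a ('D_b f) x.
Proof.
move=> Ux dfa dfb dfab dfba cab cba.
set L1 := 'D_b _ x; set L2 := 'D_a _ x.
suff close e : 0 < e -> `|L1 - L2| < e + e.
  apply/eqP; rewrite -subr_eq0 -normr_le0; apply/ler_addgt0Pr => e e0.
  by rewrite add0r (splitr e) ltW // close // divr_gt0.
move=> e0.
have near_x := @filterI _ _ (nbhs_filter x) _ _ Ux
  (@filterI _ _ (nbhs_filter x) _ _ (cvgr_dist_lt (FF := nbhs_filter x) _ _ cab _ e0)
                                    (cvgr_dist_lt (FF := nbhs_filter x) _ _ cba _ e0)).
have [t t0 sqx] := nbhs_square x a b near_x.
have sqU s w : 0 <= s <= t -> 0 <= w <= t -> U (s *: a + (w *: b + x)).
  by move=> st wt; case: (sqx s w st wt).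
have sqU' s w : 0 <= s <= t -> 0 <= w <= t -> U (s *: b + (w *: a + x)).
  by move=> st wt; rewrite addrCA; apply: sqU.
have [c1 [d1 [c1t d1t E1]]] := mixed_difference_MVT t0 sqU dfa dfab.
have [c2 [d2 [c2t d2t E2]]] := mixed_difference_MVT t0 sqU' dfb dfba.
have in_t s : 0 < s < t -> 0 <= s <= t by case/andP=> s0 st; rewrite !ltW.
have tt0 : t * t != 0 by rewrite mulf_neq0 // lt0r_neq0.
have E : 'D_b ('D_a f) (d1 *: b + (c1 *: a + x)) * t * t
       = 'D_a ('D_b f) (d2 *: a + (c2 *: b + x)) * t * t.
  apply: etrans (esym E1) (etrans _ E2).
  by rewrite [t *: b + (t *: a + x)]addrCA; ring.
move/(mulIf tt0): (etrans (mulrA _ _ _) (etrans E (esym (mulrA _ _ _)))).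
rewrite addrCA => {}E.
have [_ [near1 _]] := sqx c1 d1 (in_t _ c1t) (in_t _ d1t).
have [_ [_ near2]] := sqx d2 c2 (in_t _ d2t) (in_t _ c2t).
rewrite -E distrC in near2.
exact: le_lt_trans (ler_distD _ _ _) (ltrD near1 near2).
Qed.

End Schwarz.

Definition has_derive_pos {R : realType} (g g' : R -> R) :=
  forall r : R, 0 < r -> is_derive r 1 g (g' r).

Lemma smooth_has_derive {R : realType} {g : R -> R} k :
  smooth_pos g -> has_derive_pos (derive1n k g) (derive1n k.+1 g).
Proof. by move=> g_smooth r r0; rewrite derive1nS derive1E; apply/derivableP/g_smooth. Qed.

Lemma near_eq_partial {R : realType} {n} {f g : 'rV[R]_n -> R} i {x} :
  (\forall y \near x, f y = g y) -> partial i f x = partial i g x.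
Proof. exact: near_eq_derive. Qed.

(* [ring] and [field] would otherwise unfold these definitions when comparing atoms. *)
Ltac generalize_derivatives :=
  repeat match goal with
  | |- context [partial ?i ?f ?z] => generalize (partial i f z); intros ?
  | |- context [derive1n ?k ?f ?r] => generalize (derive1n k f r); intros ?
  | |- context [derive1 ?f ?r] => generalize (derive1 f r); intros ?
  end.

Lemma derive1_eq_pos {R : realType} {f} (h : R -> R) {r dh : R} : 0 < r ->
  (forall s : R, 0 < s -> f s = h s) -> is_derive r 1 h dh -> derive1 f r = dh.
Proof.
move=> r0 fh dh_h; rewrite derive1E.
have near_r : \forall s \near r, f s = h s by apply: filterS fh (@open_gt R 0 r r0).
by rewrite (near_eq_derive _ near_r); apply: derive_val.
Qed.

Section BohmIdentity.
Context {R : realType} {n : nat} {Omega : set 'rV[R]_n} {rho : 'rV[R]_n -> R}.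
Hypotheses (Omega_open : open Omega) (rho_smooth : smooth_on Omega rho)
  (rho_pos : forall x, Omega x -> 0 < rho x).

Lemma near_Omega {x} {P : 'rV[R]_n -> Prop} :
  Omega x -> (forall y, Omega y -> P y) -> \forall y \near x, P y.
Proof. by move=> Ox OP; apply: filterS OP (open_nbhs_nbhs (conj Omega_open Ox)). Qed.

Lemma is_derive_iter_partial s i {y} : Omega y ->
  is_derive y (ebasis R i) (iter_partial s rho) (iter_partial (i :: s) rho y).
Proof. by move=> Oy; apply/derivableP; case: (rho_smooth s y Oy). Qed.

Lemma partial_iter_partialC s i j x : Omega x ->
  partial j (partial i (iter_partial s rho)) x = partial i (partial j (iter_partial s rho)) x.
Proof.
move=> Ox; apply: (derive_comm _ _ _ _ Omega) => [|y Oy|y Oy|y Oy|y Oy||].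
- exact: open_nbhs_nbhs.
- exact: (rho_smooth s y Oy).2.
- exact: (rho_smooth s y Oy).2.
- exact: (rho_smooth (i :: s) y Oy).2.
- exact: (rho_smooth (j :: s) y Oy).2.
- exact: (rho_smooth [:: j, i & s] x Ox).1.
- exact: (rho_smooth [:: i, j & s] x Ox).1.
Qed.

Lemma partial_rhoC i j x : Omega x ->
  partial j (partial i rho) x = partial i (partial j rho) x.
Proof. exact: (partial_iter_partialC [::]). Qed.

Lemma partial2_rhoC i j x : Omega x ->
  partial j (partial i (partial j rho)) x = partial i (partial j (partial j rho)) x.
Proof. exact: (partial_iter_partialC [:: j]). Qed.

Lemma is_derive_partial_comp {g g'} (dg : has_derive_pos g g') j {y} : Omega y ->
  is_derive y (ebasis R j) (fun z => g (rho z)) (g' (rho y) * partial j rho y).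
Proof.
move=> Oy; apply: is_derive_scalar_comp; first exact: (is_derive_iter_partial [::]).
exact/dg/rho_pos.
Qed.

Lemma partial_comp {g g'} (dg : has_derive_pos g g') j y : Omega y ->
  partial j (fun z => g (rho z)) y = g' (rho y) * partial j rho y.
Proof. by move/(is_derive_partial_comp dg j) => ?; apply: derive_val. Qed.

Lemma partial2_comp {g g' g''} (dg : has_derive_pos g g') (dg' : has_derive_pos g' g'')
  i j y : Omega y ->
  partial i (partial j (fun z => g (rho z))) y =
    g'' (rho y) * partial i rho y * partial j rho y + g' (rho y) * partial i (partial j rho) y.
Proof.
move=> Oy; rewrite (near_eq_partial i (near_Omega Oy (partial_comp dg j))).
apply: derive_val; apply: is_derive_eq.
  exact: is_derive_mul_fun (is_derive_partial_comp dg' i Oy) (is_derive_iter_partial [:: j] i Oy).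
by rewrite /=; ring.
Qed.

Lemma is_derive_partial2_comp {g g' g'' g'''} (dg : has_derive_pos g g')
  (dg' : has_derive_pos g' g'') (dg'' : has_derive_pos g'' g''') k i j {y} : Omega y ->
  is_derive y (ebasis R k) (partial i (partial j (fun z => g (rho z))))
    (g''' (rho y) * partial k rho y * partial i rho y * partial j rho y
     + g'' (rho y) * (partial k (partial i rho) y * partial j rho y
                      + partial i rho y * partial k (partial j rho) y
                      + partial k rho y * partial i (partial j rho) y)
     + g' (rho y) * partial k (partial i (partial j rho)) y).
Proof.
move=> Oy; apply: near_eq_is_derive (near_Omega Oy (fun z Oz => esym (partial2_comp dg dg' i j z Oz))) _.
apply: is_derive_eq.
  apply: is_derive_add_fun; apply: is_derive_mul_fun; try apply: is_derive_mul_fun;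
  by [exact: (is_derive_partial_comp dg'') | exact: (is_derive_partial_comp dg')
     | exact: (is_derive_iter_partial [:: _]) | exact: (is_derive_iter_partial [:: _; _])].
by cbn [iter_partial]; generalize_derivatives; ring.
Qed.

Lemma laplacian_comp {g g' g''} (dg : has_derive_pos g g') (dg' : has_derive_pos g' g'')
  y : Omega y ->
  laplacian (fun z => g (rho z)) y =
    \sum_(j < n) (g'' (rho y) * partial j rho y * partial j rho y
                  + g' (rho y) * partial j (partial j rho) y).
Proof. by move=> Oy; apply: eq_bigr => j _; apply: partial2_comp. Qed.

Lemma is_derive_laplacian_comp {g g' g'' g'''} (dg : has_derive_pos g g')
  (dg' : has_derive_pos g' g'') (dg'' : has_derive_pos g'' g''') k {y} : Omega y ->
  is_derive y (ebasis R k) (laplacian (fun z => g (rho z)))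
    (\sum_(j < n) (g''' (rho y) * partial k rho y * partial j rho y * partial j rho y
     + g'' (rho y) * (partial k (partial j rho) y * partial j rho y
                      + partial j rho y * partial k (partial j rho) y
                      + partial k rho y * partial j (partial j rho) y)
     + g' (rho y) * partial k (partial j (partial j rho)) y)).
Proof.
by move=> Oy; apply: is_derive_sum_fun => j; apply: is_derive_partial2_comp.
Qed.

Context {K Phi phi F : R -> R}.
Hypotheses (K_smooth : smooth_pos K) (K_pos : forall r : R, 0 < r -> 0 < K r)
  (Phi_derive : forall r : R, 0 < r -> derivable Phi r 1 /\ derive1 Phi r = Num.sqrt (K r))
  (phi_smooth : smooth_pos phi) (F_smooth : smooth_pos F)
  (phi_derive : forall r : R, 0 < r -> Num.sqrt r * derive1 phi r = Num.sqrt (K r))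
  (F_derive : forall r : R, 0 < r -> derive1 F r = Num.sqrt (K r * r)).

Let dK : has_derive_pos K (derive1 K) := smooth_has_derive 0 K_smooth.
Let dK1 : has_derive_pos (derive1 K) (derive1n 2 K) := smooth_has_derive 1 K_smooth.
Let dphi : has_derive_pos phi (derive1 phi) := smooth_has_derive 0 phi_smooth.
Let dphi1 : has_derive_pos (derive1 phi) (derive1n 2 phi) := smooth_has_derive 1 phi_smooth.
Let dphi2 : has_derive_pos (derive1n 2 phi) (derive1n 3 phi) := smooth_has_derive 2 phi_smooth.
Let dF : has_derive_pos F (derive1 F) := smooth_has_derive 0 F_smooth.
Let dF1 : has_derive_pos (derive1 F) (derive1n 2 F) := smooth_has_derive 1 F_smooth.

Let dPhi : has_derive_pos Phi (fun r => Num.sqrt (K r)).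
Proof. by move=> r /Phi_derive[d E]; split; rewrite // -derive1E. Qed.

Let dsqrtK : has_derive_pos (fun r => Num.sqrt (K r))
                            (fun r => (2 * Num.sqrt (K r))^-1 * derive1 K r).
Proof. by move=> r r0; exact: is_derive1_comp (is_derive1_sqrt (K_pos _ r0)) (dK _ r0). Qed.

Lemma derive1F_phi (r : R) : 0 < r -> derive1 F r = r * derive1 phi r.
Proof.
move=> r0; rewrite F_derive // sqrtrM ?ltW ?K_pos // -phi_derive //.
by rewrite mulrAC -expr2 sqr_sqrtr ?ltW.
Qed.

Lemma K_phi (r : R) : 0 < r -> K r = r * derive1 phi r ^+ 2.
Proof.
move=> r0; rewrite -[K r]sqr_sqrtr ?ltW ?K_pos // -phi_derive //.
by rewrite exprMn sqr_sqrtr ?ltW.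
Qed.

Lemma derive1K_phi (r : R) : 0 < r ->
  derive1 K r = derive1 phi r ^+ 2 + 2 * r * derive1 phi r * derive1n 2 phi r.
Proof.
move=> r0; apply: (derive1_eq_pos (fun s => s * (derive1 phi s * derive1 phi s)) r0).
  by move=> s s0; rewrite K_phi // expr2.
apply: is_derive_eq.
  by apply: is_derive_mul_fun; apply: is_derive_mul_fun; exact: dphi1.
by cbv beta; generalize_derivatives; ring.
Qed.

Lemma derive2F_phi (r : R) : 0 < r ->
  derive1n 2 F r = derive1 phi r + r * derive1n 2 phi r.
Proof.
move=> r0; apply: (derive1_eq_pos (fun s => s * derive1 phi s) r0).
  exact: derive1F_phi.
apply: is_derive_eq; first by apply: is_derive_mul_fun; exact: dphi1.
by cbv beta; generalize_derivatives; ring.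
Qed.

Lemma derive2K_phi (r : R) : 0 < r ->
  derive1n 2 K r = 4 * derive1 phi r * derive1n 2 phi r
    + 2 * r * derive1n 2 phi r ^+ 2 + 2 * r * derive1 phi r * derive1n 3 phi r.
Proof.
move=> r0; apply: (derive1_eq_pos
  (fun s => derive1 phi s * derive1 phi s + 2 * s * derive1 phi s * derive1n 2 phi s) r0).
  by move=> s s0; rewrite derive1K_phi // expr2.
apply: is_derive_eq.
  apply: is_derive_add_fun; first by apply: is_derive_mul_fun; exact: dphi1.
  apply: is_derive_mul_fun; last exact: dphi2.
  by apply: is_derive_mul_fun; last exact: dphi1.
by cbv beta; rewrite [_%:A]mulr1; generalize_derivatives; ring.
Qed.

Lemma sqrtK_laplacian y : Omega y ->
  Num.sqrt (K (rho y)) * laplacian (fun z => Phi (rho z)) y =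
  \sum_(j < n) (derive1 K (rho y) / 2 * (partial j rho y * partial j rho y)
                + K (rho y) * partial j (partial j rho) y).
Proof.
move=> Oy; rewrite (laplacian_comp dPhi dsqrtK y Oy) mulr_sumr.
apply: eq_bigr => j _; have Ky := K_pos _ (rho_pos _ Oy).
have sK0 : Num.sqrt (K (rho y)) != 0 by rewrite sqrtr_eq0 -ltNge.
have sK2 : K (rho y) = Num.sqrt (K (rho y)) * Num.sqrt (K (rho y)).
  by rewrite -expr2 sqr_sqrtr // ltW.
move: sK0 sK2; generalize_derivatives.
by move: (Num.sqrt (K (rho y))) => q q0 ->; field.
Qed.

Lemma partial_sqrtK_laplacian i x : Omega x ->
  partial i (fun y => Num.sqrt (K (rho y)) * laplacian (fun z => Phi (rho z)) y) x =
  \sum_(j < n) (derive1n 2 K (rho x) / 2 * partial i rho x * (partial j rho x * partial j rho x)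
    + derive1 K (rho x) * (partial j rho x * partial i (partial j rho) x
                           + partial i rho x * partial j (partial j rho) x)
    + K (rho x) * partial i (partial j (partial j rho)) x).
Proof.
move=> Ox; rewrite (near_eq_partial i (near_Omega Ox sqrtK_laplacian)).
apply: derive_val; apply: is_derive_eq.
  apply: is_derive_sum_fun => j; apply: is_derive_add_fun; apply: is_derive_mul_fun.
  - apply: is_derive_mul_fun; exact (is_derive_partial_comp dK1 i Ox).
  - by apply: is_derive_mul_fun; exact: (is_derive_iter_partial [:: j] i Ox).
  - exact (is_derive_partial_comp dK i Ox).
  - exact: (is_derive_iter_partial [:: j; j] i Ox).
apply: eq_bigr => j _; cbn [iter_partial].
by generalize_derivatives; field.
Qed.

Lemma partial_flux i j x : Omega x ->
  partial j (fun y => F (rho y) * partial i (partial j (fun z => phi (rho z))) y) x =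
  derive1 F (rho x) * partial j rho x
    * (derive1n 2 phi (rho x) * partial i rho x * partial j rho x
       + derive1 phi (rho x) * partial i (partial j rho) x)
  + F (rho x) * (derive1n 3 phi (rho x) * partial i rho x * (partial j rho x * partial j rho x)
    + derive1n 2 phi (rho x) * (2 * partial i (partial j rho) x * partial j rho x
                                + partial i rho x * partial j (partial j rho) x)
    + derive1 phi (rho x) * partial i (partial j (partial j rho)) x).
Proof.
move=> Ox; apply: derive_val; apply: is_derive_eq.
  apply: is_derive_mul_fun; first exact (is_derive_partial_comp dF j Ox).
  exact (is_derive_partial2_comp dphi dphi1 dphi2 j i j Ox).
rewrite (partial2_comp dphi dphi1 i j x Ox) (partial_rhoC i j x Ox) (partial2_rhoC i j x Ox).
by generalize_derivatives; ring.
Qed.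

Lemma partial_pressure i x : Omega x ->
  partial i (fun y => (F (rho y) - rho y * derive1 F (rho y))
                      * laplacian (fun z => phi (rho z)) y) x =
  \sum_(j < n) (- (rho x * derive1n 2 F (rho x) * partial i rho x)
      * (derive1n 2 phi (rho x) * partial j rho x * partial j rho x
         + derive1 phi (rho x) * partial j (partial j rho) x)
    + (F (rho x) - rho x * derive1 F (rho x))
      * (derive1n 3 phi (rho x) * partial i rho x * (partial j rho x * partial j rho x)
         + derive1n 2 phi (rho x) * (2 * partial i (partial j rho) x * partial j rho x
                                     + partial i rho x * partial j (partial j rho) x)
         + derive1 phi (rho x) * partial i (partial j (partial j rho)) x)).
Proof.
move=> Ox; apply: derive_val; apply: is_derive_eq.
  apply: is_derive_mul_fun; last exact (is_derive_laplacian_comp dphi dphi1 dphi2 i Ox).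
  apply: is_derive_sub_fun; first exact (is_derive_partial_comp dF i Ox).
  apply: is_derive_mul_fun; last exact (is_derive_partial_comp dF1 i Ox).
  exact: (is_derive_iter_partial [::] i Ox).
rewrite (laplacian_comp dphi dphi1 x Ox) mulr_sumr mulr_suml -big_split.
apply: eq_bigr => j _ /=; cbn [iter_partial].
by generalize_derivatives; ring.
Qed.

Lemma bohm_identity x i : Omega x ->
  rho x * partial i (fun y => Num.sqrt (K (rho y)) * laplacian (fun z => Phi (rho z)) y) x
  = \sum_(j < n) partial j (fun y => F (rho y) *
                             partial i (partial j (fun z => phi (rho z))) y) x
    - partial i (fun y => (F (rho y) - rho y * derive1 F (rho y)) *
                          laplacian (fun z => phi (rho z)) y) x.
Proof.
move=> Ox; have r0 := rho_pos _ Ox.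
rewrite partial_sqrtK_laplacian // partial_pressure //.
rewrite (eq_bigr _ (fun j _ => partial_flux i j x Ox)).
rewrite mulr_sumr -sumrB; apply: eq_bigr => j _.
rewrite derive2K_phi // derive1K_phi // K_phi // derive2F_phi // derive1F_phi //.
by generalize_derivatives; field.
Qed.

End BohmIdentity.

Theorem mainTheorem1 (R : realType) (n : nat) (hn : (0 < n)%N)
  (K Phi phi F : R -> R)
  (hKsmooth : smooth_pos K)
  (hKpos : forall r : R, 0 < r -> 0 < K r)
  (hPhi : forall r : R, 0 < r ->
            derivable Phi r 1 /\ derive1 Phi r = Num.sqrt (K r))
  (hphi_smooth : smooth_pos phi)
  (hF_smooth : smooth_pos F)
  (hphi : forall r : R, 0 < r ->
            Num.sqrt r * derive1 phi r = Num.sqrt (K r))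
  (hF : forall r : R, 0 < r -> derive1 F r = Num.sqrt (K r * r))
  (Omega : set 'rV[R]_n) (hOmega : open Omega)
  (rho : 'rV[R]_n -> R)
  (hrho_smooth : smooth_on Omega rho)
  (hrho_pos : forall x, Omega x -> 0 < rho x) :
  forall (x : 'rV[R]_n), Omega x -> forall i : 'I_n,
    rho x * partial i (fun y => Num.sqrt (K (rho y)) *
                                laplacian (fun z => Phi (rho z)) y) x
    = \sum_(j < n) partial j (fun y => F (rho y) *
                               partial i (partial j (fun z => phi (rho z))) y) x
      - partial i (fun y => (F (rho y) - rho y * derive1 F (rho y)) *
                             laplacian (fun z => phi (rho z)) y) x.
Proof.
move=> x Ox i.
exact (bohm_identity hOmega hrho_smooth hrho_pos hKsmooth hKpos hPhi hphi_smooth hF_smooth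
  hphi hF x i Ox).
Qed.
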